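(* Let $\bar L$ and $K$ be positive integers with $K\le \bar L/2$. Consider the following procedure producing, for $n=1,\dots,K$, a list of $n$ positive integers $L^{(n)}_1\le\cdots\le L^{(n)}_n$ (sorted ascending). For $n=1$: $L^{(1)}_1=2^{\lfloor\log_2\bar L\rfloor}$. For $n\ge2$: let $r^{(n-1)}=\bar L-\sum_{k=1}^{n-1}L^{(n-1)}_k$. If $r^{(n-1)}\ge L^{(n-1)}_{n-1}/2$, keep all previous lengths and add a new length $2^{\lfloor\log_2 r^{(n-1)}\rfloor}$; otherwise replace the largest length $L^{(n-1)}_{n-1}$ by two lengths each equal to $L^{(n-1)}_{n-1}/2$, keeping the others. Then sort the resulting $n$ lengths ascending to obtain $L^{(n)}_1\le\dots\le L^{(n)}_n$. Then the final lengths $L_k=L^{(K)}_k$, $k=1,\dots,K$, are all powers of $2$, satisfy $\sum_{k=1}^K L_k\le\bar L$, and maximize $\sum_{k=1}^K\lfloor\log_2 L_k\rfloor$ over all $K$-tuples of positive integers $(L_1,\dots,L_K)$ with $\sum_{k=1}^K L_k\le\bar L$.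
   Context: This procedure partitions (a truncation of) a dictionary matrix with $\bar L$ columns into $K$ subblocks of sizes $L_1,\dots,L_K$; in subblock sparse coding, the number of bits carried by the support is $\sum_{k=1}^K\lfloor\log_2 L_k\rfloor$. *)

From mathcomp Require Import all_boot.
Set Implicit Arguments. Unset Strict Implicit. Unset Printing Implicit Defensive.

Definition flog2 (n : nat) : nat := trunc_log 2 n.

Definition alloc_step (Lbar : nat) (s : seq nat) : seq nat :=
  let r := Lbar - sumn s in
  let Lmax := last 0 s in
  if Lmax <= 2 * r                   (* r >= Lmax / 2 *)
  then sort leq (rcons s (2 ^ flog2 r))
  else sort leq (take (size s).-1 s ++ [:: Lmax %/ 2; Lmax %/ 2]).

(* alloc Lbar n = the list L^(n) (for n >= 1); alloc Lbar 0 = [::] unused. *)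
Fixpoint alloc (Lbar n : nat) : seq nat :=
  match n with
  | 0 => [::]
  | 1 => [:: 2 ^ flog2 Lbar]
  | m.+1 => alloc_step Lbar (alloc Lbar m)
  end.

From mathcomp Require Import all_boot.
From mathcomp Require Import zify.

(* Call a sorted list s "near-full at level a" when every entry
   is 2^a or 2^(a+1), sumn s <= Lbar and the slack Lbar - sumn s is below
   2^a.  The procedure starts near-full (a single 2^flog2 Lbar) and every step
   preserves the property, possibly lowering the level: adding 2^flog2 r
   happens only when the largest entry is 2^a and then r >= 2^(a-1); splitting
   the largest entry keeps the sum and moves to level a-1 when everything was
   already 2^a.  The hypothesis K <= Lbar/2 excludes the only stuck case, a
   list of ones exhausting Lbar.
   Optimality is a tangent-line argument: for every x > 0,
   2^a (flog2 x + 1) <= x + a 2^a, with equality at x = 2^a and x = 2^(a+1).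
   Summing over a competitor t and over the output L, and using
   sumn t <= Lbar < sumn L + 2^a, gives sumn (map flog2 t) <= sumn (map flog2 L). *)

Lemma flog2_exp a : flog2 (2 ^ a) = a.
Proof. by rewrite /flog2 trunc_expnK. Qed.

Lemma flog2_le {x : nat} : 0 < x -> 2 ^ flog2 x <= x.
Proof. exact: trunc_logP. Qed.

Lemma flog2_ltn x : x < 2 ^ (flog2 x).+1.
Proof. exact: trunc_log_ltn. Qed.

Lemma sorted_rcons_max (s : seq nat) x :
  sorted leq (rcons s x) -> all (fun y => y <= x) s.
Proof.
rewrite -[rcons s x]revK rev_sorted rev_rcons /= -(all_rev _ s).
by apply: order_path_min => y z w hzy hwz; apply: leq_trans hwz hzy.
Qed.

Lemma sumn_le_size_mul (s : seq nat) c :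
  all (fun y => y <= c) s -> sumn s <= size s * c.
Proof. by elim: s => //= y s IH /andP[hy /IH hs]; rewrite mulSn leq_add. Qed.

Definition two_level (a x : nat) : bool := (x == 2 ^ a) || (x == 2 ^ a.+1).

Definition near_full (Lbar a : nat) (s : seq nat) : Prop :=
  [/\ sorted leq s, all (two_level a) s, sumn s <= Lbar & Lbar < sumn s + 2 ^ a].

Lemma near_full_sort Lbar a s :
  all (two_level a) s -> sumn s <= Lbar -> Lbar < sumn s + 2 ^ a ->
  near_full Lbar a (sort leq s).
Proof.
have hp : perm_eq (sort leq s) s by rewrite perm_sort.
by rewrite /near_full (perm_all _ hp) (perm_sumn hp) sort_sorted //; exact: leq_total.
Qed.

Lemma two_level_drop b (s : seq nat) :
  all (two_level b.+1) s -> all (fun y => y <= 2 ^ b.+1) s -> all (two_level b) s.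
Proof.
move=> /allP hlev /allP hle; apply/allP => y hy.
move: (hle y hy); case/orP: (hlev y hy) => /eqP -> h; first by rewrite /two_level eqxx orbT.
by rewrite expnS in h; have := expn_gt0 2 b.+1; lia.
Qed.

Lemma alloc_step_rcons Lbar s x :
  alloc_step Lbar (rcons s x) =
  let r := Lbar - (sumn s + x) in
  if x <= 2 * r then sort leq (rcons (rcons s x) (2 ^ flog2 r))
  else sort leq (s ++ [:: x %/ 2; x %/ 2]).
Proof.
have hbody : take (size s) (rcons s x) = s by rewrite -cats1 take_size_cat.
by rewrite /alloc_step last_rcons sumn_rcons size_rcons /= hbody.
Qed.

Lemma size_alloc_step Lbar s :
  0 < size s -> size (alloc_step Lbar s) = (size s).+1.
Proof.
case/lastP: s => [|s x] // _; rewrite alloc_step_rcons /=.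
by case: ifP => _; rewrite size_sort ?size_cat ?size_rcons //= addn2.
Qed.

Section Step.
Context {Lbar a : nat} {s : seq nat} {x : nat}.
Hypothesis Hnear : near_full Lbar a (rcons s x).

Let r := Lbar - (sumn s + x).

Let Hbody : all (two_level a) s.
Proof. by case: Hnear; rewrite all_rcons => _ /andP[]. Qed.

Let Hx : two_level a x.
Proof. by case: Hnear; rewrite all_rcons => _ /andP[]. Qed.

Let Hmax : all (fun y => y <= x) s.
Proof. by case: Hnear => /sorted_rcons_max. Qed.

Let Hsum : sumn s + x <= Lbar.
Proof. by case: Hnear; rewrite sumn_rcons. Qed.

Let Hslack : r < 2 ^ a.
Proof. by case: Hnear; rewrite sumn_rcons /r; lia. Qed.

(* Adding a new length: this forces x = 2^a with a > 0, the remainder r lies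
   in [2^(a-1), 2^a), and the new list is near-full at level a-1. *)
Lemma step_add_near_full :
  x <= 2 * r -> near_full Lbar a.-1 (sort leq (rcons (rcons s x) (2 ^ flog2 r))).
Proof.
move=> hxr.
have hx : x = 2 ^ a by case/orP: Hx => /eqP hx //; move: hxr Hslack; rewrite hx expnS; lia.
case: a Hbody Hmax Hslack hx => [|b] hbody hmax hslack hx /=.
  by move: hxr hslack; rewrite hx expn0; lia.
have hr : 2 ^ b <= r < 2 ^ b.+1 by move: hxr hslack; rewrite hx expnS; lia.
rewrite /flog2 (trunc_log_eq _ hr) //; apply: near_full_sort.
- rewrite !all_rcons /two_level hx !eqxx !orbT /=.
  by apply: two_level_drop; rewrite -?hx.
- by rewrite !sumn_rcons; lia.
- by rewrite !sumn_rcons; move: hr; rewrite /r expnS; lia.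
Qed.

Lemma step_split_top_near_full :
  x = 2 ^ a.+1 -> near_full Lbar a (sort leq (s ++ [:: x %/ 2; x %/ 2])).
Proof.
move=> hx; have hh : x %/ 2 = 2 ^ a by rewrite hx expnS mulKn.
apply: near_full_sort; rewrite ?hh.
- by rewrite all_cat Hbody /= /two_level eqxx.
- by rewrite sumn_cat /=; move: Hsum; rewrite hx expnS; lia.
- by rewrite sumn_cat /=; move: Hslack; rewrite /r hx expnS; lia.
Qed.

(* Splitting a largest entry equal to 2^a (a > 0) when r < 2^(a-1) lowers the
   level by one, all entries being 2^a beforehand. *)
Lemma step_split_low_near_full :
  x = 2 ^ a -> 0 < a -> 2 * r < x ->
  near_full Lbar a.-1 (sort leq (s ++ [:: x %/ 2; x %/ 2])).
Proof.
case: a Hbody Hmax => [|b] // hbody hmax hx _ hxr /=.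
have hh : x %/ 2 = 2 ^ b by rewrite hx expnS mulKn.
have hlow : all (two_level b) s by apply: two_level_drop; rewrite -?hx.
apply: near_full_sort; rewrite ?hh.
- by rewrite all_cat hlow /= /two_level eqxx.
- by rewrite sumn_cat /=; move: Hsum; rewrite hx expnS; lia.
- by rewrite sumn_cat /=; move: hxr; rewrite /r hx expnS; lia.
Qed.

(* The only stuck configuration: all entries are ones and they exhaust Lbar,
   which needs at least Lbar entries. *)
Lemma ones_exhaust : x = 1 -> 2 * r < x -> Lbar <= size (rcons s x).
Proof.
move=> hx hxr; have := @sumn_le_size_mul s x Hmax.
by move: Hsum hxr; rewrite size_rcons /r hx; lia.
Qed.

End Step.

Lemma near_full_step Lbar a s :
  near_full Lbar a s -> 0 < size s -> (size s).+1 <= Lbar %/ 2 ->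
  exists a', near_full Lbar a' (alloc_step Lbar s).
Proof.
case/lastP: s => [|s x] hnear // _ hsize; rewrite alloc_step_rcons /=.
case: ifP => hxr; first by exists a.-1; exact: step_add_near_full.
move/negbT: hxr; rewrite -ltnNge => hxr.
have [hx | hx] : x = 2 ^ a \/ x = 2 ^ a.+1.
  by case: hnear; rewrite all_rcons => _ /andP[/orP[] /eqP]; [left | right].
- case: a hnear hx => [|b] hnear hx.
    by have := ones_exhaust hnear hx hxr; move: hsize; lia.
  by exists b; exact: step_split_low_near_full hnear hx isT hxr.
- by exists a; exact: step_split_top_near_full.
Qed.

Lemma alloc_near_full {Lbar n : nat} :
  0 < Lbar -> 0 < n -> n <= Lbar %/ 2 ->
  size (alloc Lbar n) = n /\ exists a, near_full Lbar a (alloc Lbar n).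
Proof.
move=> hL; elim: n => [|[|n] IH] // _ hn.
  split => //; exists (flog2 Lbar); split => //=.
  - by rewrite /two_level eqxx.
  - by rewrite addn0 flog2_le.
  - by have := flog2_ltn Lbar; rewrite addn0 expnS; lia.
have [hsize [a hnear]] := IH isT (ltnW hn).
change (alloc Lbar n.+2) with (alloc_step Lbar (alloc Lbar n.+1)).
by rewrite size_alloc_step hsize //; split => //; apply: near_full_step hnear _ _; rewrite hsize.
Qed.

(* Tangent bound for f |-> 2^f at level a:  2^a (f + 1) <= 2^f + a 2^a.
   For f >= a it is Bernoulli's  f - a + 1 <= 2^(f - a). *)
Lemma pow2_tangent a f : 2 ^ a * (f + 1) <= 2 ^ f + a * 2 ^ a.
Proof.
case: (ltnP f a) => hfa.
  have : 2 ^ a * (f + 1) <= 2 ^ a * a by rewrite leq_mul2l addn1 hfa orbT.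
  lia.
have -> : f = a + (f - a) by lia.
have := ltn_expl (f - a) (isT : 1 < 2); rewrite expnD; nia.
Qed.

Lemma flog2_tangent a x : 0 < x -> 2 ^ a * (flog2 x + 1) <= x + a * 2 ^ a.
Proof. by move=> hx; have := pow2_tangent a (flog2 x); have := flog2_le hx; lia. Qed.

Lemma flog2_tangent_eq a x : two_level a x -> 2 ^ a * (flog2 x + 1) = x + a * 2 ^ a.
Proof. by case/orP => /eqP ->; rewrite flog2_exp ?expnS; lia. Qed.

Lemma sumn_flog2_tangent a {t : seq nat} :
  all (fun x => 0 < x) t ->
  2 ^ a * (sumn (map flog2 t) + size t) <= sumn t + size t * (a * 2 ^ a).
Proof.
elim: t => [|x t IH] /=; first by rewrite muln0.
by move=> /andP[/(flog2_tangent a) hx /IH ht]; rewrite mulSn; lia.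
Qed.

Lemma sumn_flog2_tangent_eq {a : nat} {s : seq nat} :
  all (two_level a) s ->
  2 ^ a * (sumn (map flog2 s) + size s) = sumn s + size s * (a * 2 ^ a).
Proof.
elim: s => [|x s IH] /=; first by rewrite muln0.
by move=> /andP[/flog2_tangent_eq hx /IH hs]; rewrite mulSn; lia.
Qed.

Theorem mainTheorem2 (Lbar K : nat) :
  0 < Lbar -> 0 < K -> K <= Lbar %/ 2 ->
  let L := alloc Lbar K in
  [/\ size L = K,
      (forall x, x \in L -> exists e, x = 2 ^ e),
      sumn L <= Lbar &
      forall t : seq nat, size t = K -> all (fun x => 0 < x) t -> sumn t <= Lbar ->
        sumn (map flog2 t) <= sumn (map flog2 L)].
Proof.
move=> hL hK hKL L.
have [hsize [a [_ hlevel hsum hslack]]] := alloc_near_full hL hK hKL.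
split => //.
- by move=> x /(allP hlevel) /orP[] /eqP ->; eexists.
- move=> t htsize htpos htsum.
  have ht := sumn_flog2_tangent a htpos.
  have hLeq := sumn_flog2_tangent_eq hlevel.
  rewrite htsize in ht; rewrite hsize in hLeq.
  have : 2 ^ a * (sumn (map flog2 t) + K) < 2 ^ a * (sumn (map flog2 L) + K + 1).
    by rewrite (mulnDr _ _ 1) muln1 hLeq; lia.
  by rewrite ltn_pmul2l ?expn_gt0 //; lia.
Qed.
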